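(* Let $\mathrm{NT}=\{(x_1,x_2,x_3)\in\mathbb{R}^3: 2^kx_1+2\cdot 3^kx_2+5^kx_3\ge 0 \text{ for all integers } k\ge 0\}$ with topological boundary $\partial\mathrm{NT}$. Then for every integer $n\ge 0$, the point $\left(\frac{1}{2^n},-\frac{1}{3^n},\frac{1}{5^n}\right)$ lies in $\partial\mathrm{NT}$.
   Context: $\mathrm{NT}$ is the non-termination set of the loop ''while $(x_1+2x_2+x_3\ge 0)$ $\{(x_1,x_2,x_3):=(2x_1,3x_2,5x_3)\}$''. *)

From Stdlib Require Import Reals.
Open Scope R_scope.

Definition R3 : Type := (R * R * R)%type.

Definition dist3 (p q : R3) : R :=
  let '(p1, p2, p3) := p in
  let '(q1, q2, q3) := q in
  sqrt ((p1 - q1)^2 + (p2 - q2)^2 + (p3 - q3)^2).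

(* The non-termination set of
   while (x1 + 2 x2 + x3 >= 0) { (x1,x2,x3) := (2x1, 3x2, 5x3) } *)
Definition NT (x : R3) : Prop :=
  let '(x1, x2, x3) := x in
  forall k : nat, 2 ^ k * x1 + 2 * 3 ^ k * x2 + 5 ^ k * x3 >= 0.

Definition closure3 (S : R3 -> Prop) (p : R3) : Prop :=
  forall eps : R, eps > 0 -> exists q : R3, S q /\ dist3 p q < eps.

Definition interior3 (S : R3 -> Prop) (p : R3) : Prop :=
  exists eps : R, eps > 0 /\ forall q : R3, dist3 p q < eps -> S q.

Definition boundary3 (S : R3 -> Prop) (p : R3) : Prop :=
  closure3 S p /\ ~ interior3 S p.

From Stdlib Require Import Reals Lra Lia ZArith.
Open Scope R_scope.

(* The point p_n = (1/2^n, -1/3^n, 1/5^n) is the n-th preimage of (1,-1,1)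
   under the loop map A = diag(2,3,5).  Evaluating the k-th loop guard
   x1 + 2 x2 + x3 on A^k p_n therefore only depends on the integer k - n:
   it equals the "guard profile" g(z) = 2^z - 2*3^z + 5^z.

   - g(z) >= 0 for every integer z: for z >= 0 this is the AM-GM inequality
     2*3^z <= 2^z + 5^z (as 3^2 <= 2*5); for z = -s < 0 it is
     2/3^s <= 1/2^s + 1/5^s, checked directly for s = 1 and following from
     2*2^s <= 3^s for s >= 2.  Hence p_n lies in NT, thus in its closure.
   - g(0) = 0, so the n-th guard is tight at p_n: moving the first coordinate
     down by any d > 0 leaves NT, so p_n is not an interior point. *)

Lemma closure3_of_mem (S : R3 -> Prop) (p : R3) : S p -> closure3 S p.
Proof.
  intros Hp eps Heps. exists p. split; [exact Hp|].
  destruct p as [[p1 p2] p3]; unfold dist3.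
  replace ((p1 - p1) ^ 2 + (p2 - p2) ^ 2 + (p3 - p3) ^ 2) with 0 by ring.
  rewrite sqrt_0. lra.
Qed.

Lemma not_interior3 (S : R3 -> Prop) (p : R3) :
  (forall eps, eps > 0 -> exists q, dist3 p q < eps /\ ~ S q) ->
  ~ interior3 S p.
Proof.
  intros Happrox [eps [Heps Hball]].
  destruct (Happrox eps Heps) as [q [Hq HnS]].
  exact (HnS (Hball q Hq)).
Qed.

Lemma dist3_shift1 (x1 x2 x3 d : R) :
  0 <= d -> dist3 (x1, x2, x3) (x1 - d, x2, x3) = d.
Proof.
  intros Hd; unfold dist3.
  replace ((x1 - (x1 - d)) ^ 2 + (x2 - x2) ^ 2 + (x3 - x3) ^ 2) with (d ^ 2)
    by ring.
  apply sqrt_pow2; exact Hd.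
Qed.

Lemma amgm_pow (a b c : R) (m : nat) :
  0 < a -> 0 <= b -> 0 < c -> b * b <= a * c ->
  2 * b ^ m <= a ^ m + c ^ m.
Proof.
  intros Ha Hb Hc Hbac.
  assert (HA : 0 < a ^ m) by (apply pow_lt; exact Ha).
  assert (HC : 0 < c ^ m) by (apply pow_lt; exact Hc).
  assert (Hsq : b ^ m * b ^ m <= a ^ m * c ^ m).
  { rewrite <- !Rpow_mult_distr. apply pow_incr. nra. }
  (* (2 b^m)^2 <= 4 a^m c^m <= (a^m + c^m)^2, then take square roots. *)
  apply Rsqr_incr_0_var; [|lra].
  pose proof (Rle_0_sqr (a ^ m - c ^ m)); unfold Rsqr in *; nra.
Qed.

Lemma double_pow2_le_pow3 (s : nat) : (2 <= s)%nat -> 2 * 2 ^ s <= 3 ^ s.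
Proof.
  induction 1 as [|s Hs IH]; [simpl; lra|].
  assert (0 < 2 ^ s) by (apply pow_lt; lra).
  simpl; lra.
Qed.

Lemma guard_profile_neg (s : nat) :
  (1 <= s)%nat -> 2 * / 3 ^ s <= / 2 ^ s + / 5 ^ s.
Proof.
  intros Hs.
  assert (H2 : 0 < 2 ^ s) by (apply pow_lt; lra).
  assert (H3 : 0 < 3 ^ s) by (apply pow_lt; lra).
  assert (H5 : 0 < / 5 ^ s) by (apply Rinv_0_lt_compat, pow_lt; lra).
  destruct (Nat.eq_dec s 1) as [->|Hs1]; [simpl; lra|].
  assert (Hdom : 2 * 2 ^ s <= 3 ^ s) by (apply double_pow2_le_pow3; lia).
  assert (Hinv : 2 * / 3 ^ s <= / 2 ^ s).
  { apply (Rmult_le_reg_r (2 ^ s * 3 ^ s)); [nra|].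
    field_simplify; lra. }
  lra.
Qed.

(* The guard x1 + 2 x2 + x3 evaluated at A^z (1,-1,1), for z an integer. *)
Definition guard_profile (z : Z) : R :=
  powerRZ 2 z - 2 * powerRZ 3 z + powerRZ 5 z.

Lemma guard_profile_nonneg (z : Z) : 0 <= guard_profile z.
Proof.
  unfold guard_profile.
  destruct (Z_le_gt_dec 0 z) as [Hz|Hz].
  - rewrite <- (Z2Nat.id z Hz), <- !pow_powerRZ.
    pose proof (amgm_pow 2 3 5 (Z.to_nat z)). lra.
  - replace z with (- Z.of_nat (Z.to_nat (- z)))%Z by lia.
    rewrite !powerRZ_neg', <- !pow_powerRZ.
    pose proof (guard_profile_neg (Z.to_nat (- z)) ltac:(lia)). lra.
Qed.

Lemma pow_div_powerRZ (x : R) (k n : nat) :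
  x <> 0 -> x ^ k * (1 / x ^ n) = powerRZ x (Z.of_nat k - Z.of_nat n).
Proof.
  intros Hx.
  rewrite <- Z.add_opp_r, powerRZ_add, powerRZ_neg', <- !pow_powerRZ
    by exact Hx.
  unfold Rdiv; ring.
Qed.

Lemma guard_at_point (k n : nat) :
  2 ^ k * (1 / 2 ^ n) + 2 * 3 ^ k * - (1 / 3 ^ n) + 5 ^ k * (1 / 5 ^ n)
  = guard_profile (Z.of_nat k - Z.of_nat n).
Proof.
  unfold guard_profile.
  rewrite <- !pow_div_powerRZ by lra.
  ring.
Qed.

Lemma point_in_NT (n : nat) : NT (1 / 2 ^ n, - (1 / 3 ^ n), 1 / 5 ^ n).
Proof.
  intros k. rewrite guard_at_point.
  apply Rle_ge, guard_profile_nonneg.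
Qed.

Theorem lemma14 (n : nat) :
  boundary3 NT (1 / 2 ^ n, - (1 / 3 ^ n), 1 / 5 ^ n).
Proof.
  split; [apply closure3_of_mem, point_in_NT|].
  apply not_interior3; intros eps Heps.
  exists (1 / 2 ^ n - eps / 2, - (1 / 3 ^ n), 1 / 5 ^ n).
  split; [rewrite dist3_shift1; lra|].
  (* The n-th guard, tight at p_n since g(0) = 0, becomes negative. *)
  intros Hq; specialize (Hq n).
  assert (Htight : guard_profile (Z.of_nat n - Z.of_nat n) = 0)
    by (rewrite Z.sub_diag; unfold guard_profile; simpl; lra).
  rewrite <- guard_at_point in Htight.
  assert (H2 : 0 < 2 ^ n) by (apply pow_lt; lra).
  assert (Hsplit : 2 ^ n * (1 / 2 ^ n - eps / 2)
                   = 2 ^ n * (1 / 2 ^ n) - 2 ^ n * (eps / 2)) by ring.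
  rewrite Hsplit in Hq. nra.
Qed.
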